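(* Let $(I,\leq)$ be a finite poset with a unique maximal element, and let $F,G\subseteq K_I$ be nonzero subfunctors of the constant functor $K_I$. Then the following are equivalent: (1) $F\preccurlyeq G$, i.e.\ $\mathrm{supp}(F)\supseteq\mathrm{supp}(G)$; (2) $\mathrm{Nat}(G,F)\neq0$; (3) $\dim\mathrm{Nat}(G,F)=1$.
   Context: $K$ is a field; $K_I\colon I\to\mathrm{vect}_K$ is the constant functor with value $K$ and identity transition maps. For a subfunctor $F\subseteq K_I$, $\mathrm{supp}(F)=\{v\in I\mid F(v)\neq0\}$. $\mathrm{Nat}(G,F)$ denotes the $K$-vector space of natural transformations $G\to F$. *)

From HB Require Import structures.
From mathcomp Require Import all_boot all_order all_algebra.
Set Implicit Arguments. Unset Strict Implicit. Unset Printing Implicit Defensive.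
Import Order.TTheory GRing.Theory.
Local Open Scope ring_scope.
Local Open Scope order_scope.

(* The constant functor K_I sends every v to the 1-dimensional K-space K^o
   (K regarded as a vector space over itself) with identity transition maps.
   A subfunctor F of K_I is a family of subspaces F v of K^o such that the
   identity transition maps restrict, i.e. F v <= F w whenever v <= w. *)
Definition is_subfunctor (K : fieldType) (d : Order.disp_t) (I : finPOrderType d)
    (F : I -> {vspace K^o}) : Prop :=
  forall v w : I, v <= w -> (F v <= F w)%VS.

Definition supp (K : fieldType) (d : Order.disp_t) (I : finPOrderType d)
    (F : I -> {vspace K^o}) : {set I} :=
  [set v | F v != 0%VS].

Definition subf_preceq (K : fieldType) (d : Order.disp_t) (I : finPOrderType d)
    (F G : I -> {vspace K^o}) : Prop :=
  supp G \subset supp F.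

Definition nat_family (K : fieldType) (d : Order.disp_t) (I : finPOrderType d)
    (G F : I -> {vspace K^o}) :=
  forall v : I, 'Hom(subvs_of (G v), subvs_of (F v)).

(* Naturality: for v <= w, eta w \o (G(v<=w)) = (F(v<=w)) \o eta v, where the
   transition maps are the restrictions of the identity of K (the inclusions
   G v -> G w, F v -> F w), written as vsproj (G w) \o vsval. *)
Definition is_natural (K : fieldType) (d : Order.disp_t) (I : finPOrderType d)
    (G F : I -> {vspace K^o}) (eta : nat_family G F) : Prop :=
  forall (v w : I), v <= w -> forall x : subvs_of (G v),
    vsproj (F w) (vsval (eta v x)) = eta w (vsproj (G w) (vsval x)).

Definition nat_is_zero (K : fieldType) (d : Order.disp_t) (I : finPOrderType d)
    (G F : I -> {vspace K^o}) (eta : nat_family G F) : Prop :=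
  forall v : I, eta v = 0.

Definition Nat_nonzero (K : fieldType) (d : Order.disp_t) (I : finPOrderType d)
    (G F : I -> {vspace K^o}) : Prop :=
  exists eta : nat_family G F, is_natural eta /\ ~ nat_is_zero eta.

(* dim Nat(G,F) = 1 : Nat(G,F) is spanned by a single nonzero vector, i.e.
   there is a nonzero natural eta such that every natural eta' is a scalar
   multiple c * eta (componentwise, Nat(G,F) having the componentwise
   K-vector space structure). *)
Definition Nat_dim1 (K : fieldType) (d : Order.disp_t) (I : finPOrderType d)
    (G F : I -> {vspace K^o}) : Prop :=
  exists eta : nat_family G F, [/\ is_natural eta, ~ nat_is_zero eta &
    forall eta' : nat_family G F, is_natural eta' ->
      exists c : K, forall v : I, eta' v = c *: eta v].

Definition is_maximal (d : Order.disp_t) (I : finPOrderType d) (m : I) : Prop :=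
  forall v : I, m <= v -> v = m.

From HB Require Import structures.
From mathcomp Require Import all_boot all_order all_algebra.
Import Order.TTheory GRing.Theory.
Local Open Scope ring_scope.

(* Every v lies below the unique maximal element m (I is finite), and a nonzero
   subspace of K is K itself.  Naturality along v <= m then shows that
   eta_v(1) = eta_m(1) whenever G v <> 0, so a natural transformation
   eta : G -> F is determined by the scalar eta_m(1).  If G v <> 0 = F v this
   scalar is forced to vanish, so Nat(G,F) = 0.  If supp G is contained in
   supp F, the inclusions G v -> F v form a natural transformation with
   eta_m(1) = 1, and any eta is eta_m(1) times it. *)

Section MaximalElements.

Context {d : Order.disp_t} {I : finPOrderType d}.

Lemma exists_maximal_ge (v : I) : exists2 w : I, (v <= w)%O & is_maximal w.
Proof.
have [w vw w_min] := arg_minnP (fun w => #|[set u | w < u]%O|) (lexx v).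
exists w => // u wu; apply/eqP; apply: contraT => uNw.
have wu_lt : (w < u)%O by rewrite lt_def uNw.
have /proper_card : [set x | u < x]%O \proper [set x | w < x]%O.
  apply/properP; split; last by exists u; rewrite !inE ?ltxx.
  by apply/subsetP => x; rewrite !inE; apply: lt_trans.
by rewrite ltnNge w_min // (le_trans vw wu).
Qed.

Lemma le_unique_maximal {m : I} :
  (forall m' : I, is_maximal m' -> m' = m) -> forall v : I, (v <= m)%O.
Proof. by move=> m_uniq v; have [w vw /m_uniq <-] := exists_maximal_ge v. Qed.

End MaximalElements.

Section SubspacesOfK.

Context {K : fieldType}.
Implicit Types (U : {vspace K^o}).

Lemma vspace_neq0_full {U} : U != 0%VS -> U = fullv.
Proof.
move=> /negbTE U0; apply/eqP; rewrite eqEdim subvf dimvf /=.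
by rewrite lt0n dimv_eq0 U0.
Qed.

Lemma memv1_neq0 {U} : U != 0%VS -> (1 : K^o) \in U.
Proof. by move=> /vspace_neq0_full ->; rewrite memvf. Qed.

Lemma subvs_vspace0 {U} (y : subvs_of U) : U = 0%VS -> y = 0.
Proof.
by move=> U0; apply: subvs_inj; rewrite linear0; apply/eqP; rewrite -memv0 -U0 subvsP.
Qed.

Lemma lfun_subvs_eq0 (W : vectType K) U (f : 'Hom(subvs_of U, W)) :
  f (vsproj U 1) = 0 -> f = 0.
Proof.
move=> f1; apply/lfunP => y; rewrite zero_lfunE.
have [U0|U_neq0] := eqVneq U 0%VS; first by rewrite (subvs_vspace0 y U0) linear0.
have -> : y = (vsval y : K) *: vsproj U 1.
  by apply: subvs_inj; rewrite linearZ /= vsprojK ?memv1_neq0 // [_ *: _]mulr1.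
by rewrite linearZ /= f1 scaler0.
Qed.

End SubspacesOfK.

Lemma subfunctor_neq0_top {K : fieldType} {d : Order.disp_t} {I : finPOrderType d}
    {H : I -> {vspace K^o}} {m : I} :
  (forall v : I, (v <= m)%O) -> is_subfunctor H -> (exists v, H v != 0%VS) ->
  H m != 0%VS.
Proof.
move=> le_m hH [v Hv]; apply: contraNneq Hv => Hm0.
by rewrite -subv0 -Hm0 (hH _ _ (le_m v)).
Qed.

Section NaturalTransformations.

Context {K : fieldType} {d : Order.disp_t} {I : finPOrderType d}.
Context {F G : I -> {vspace K^o}}.
Hypothesis hF : is_subfunctor F.

(* The scalar eta_v(1); it is 0 when G v = 0, as vsproj then sends 1 to 0. *)
Definition nat_value (eta : nat_family G F) (v : I) : K :=
  vsval (eta v (vsproj (G v) 1)).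

Lemma natural_value_le {eta : nat_family G F} {v w : I} :
  is_natural eta -> (v <= w)%O -> G v != 0%VS -> nat_value eta w = nat_value eta v.
Proof.
move=> eta_nat vw Gv; rewrite /nat_value.
have := eta_nat v w vw (vsproj (G v) 1); rewrite vsprojK ?memv1_neq0 // => <-.
by rewrite vsprojK //; apply: (subvP (hF _ _ vw)); exact: subvsP.
Qed.

Lemma natural_comb (a : K) {eta1 eta2 : nat_family G F} :
  is_natural eta1 -> is_natural eta2 -> is_natural (fun v => a *: eta1 v + eta2 v).
Proof.
move=> nat1 nat2 v w vw x; rewrite !add_lfunE !scale_lfunE.
by rewrite !raddfD /= !linearZ /= (nat1 v w vw) (nat2 v w vw).
Qed.

Definition incl_nat : nat_family G F := fun v => linfun (vsproj (F v) \o vsval).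

Lemma incl_natE (v : I) (x : subvs_of (G v)) : incl_nat v x = vsproj (F v) (vsval x).
Proof. by rewrite lfunE. Qed.

Lemma incl_nat_natural :
  is_subfunctor G -> subf_preceq F G -> is_natural incl_nat.
Proof.
move=> hG /subsetP suppGF v w vw x; rewrite !incl_natE.
have [Gv0|Gv] := eqVneq (G v) 0%VS; first by rewrite (subvs_vspace0 x Gv0) !linear0.
have Fv : F v != 0%VS by have := suppGF v; rewrite !inE; apply.
have xFv : vsval x \in F v by rewrite (vspace_neq0_full Fv) memvf.
have xGw : vsval x \in G w by apply: (subvP (hG _ _ vw)); exact: subvsP.
by rewrite (vsprojK xFv) (vsprojK xGw).
Qed.

Lemma nat_value_incl {v : I} : G v != 0%VS -> F v != 0%VS -> nat_value incl_nat v = 1.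
Proof. by move=> Gv Fv; rewrite /nat_value incl_natE !vsprojK ?memv1_neq0. Qed.

Context {m : I}.
Hypothesis le_m : forall v : I, (v <= m)%O.

Lemma natural_eq0 {eta : nat_family G F} :
  is_natural eta -> nat_value eta m = 0 -> nat_is_zero eta.
Proof.
move=> eta_nat eta_m0 v; apply: lfun_subvs_eq0.
have [Gv0|Gv] := eqVneq (G v) 0%VS.
  by rewrite (subvs_vspace0 (vsproj (G v) 1) Gv0) linear0.
apply: subvs_inj; rewrite linear0 -eta_m0 -/(nat_value eta v).
by rewrite (natural_value_le eta_nat (le_m v) Gv).
Qed.

Lemma subf_preceq_of_Nat_nonzero : Nat_nonzero G F -> subf_preceq F G.
Proof.
case=> eta [eta_nat eta_neq0]; apply/subsetP => v; rewrite !inE => Gv.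
apply/negP => /eqP Fv0; apply: eta_neq0; apply: (natural_eq0 eta_nat).
rewrite (natural_value_le eta_nat (le_m v) Gv) /nat_value.
by rewrite (subvs_vspace0 (eta v _) Fv0) linear0.
Qed.

Lemma Nat_dim1_of_subf_preceq :
  is_subfunctor G -> G m != 0%VS -> F m != 0%VS -> subf_preceq F G -> Nat_dim1 G F.
Proof.
move=> hG Gm Fm suppGF; have incl_nat_m := nat_value_incl Gm Fm.
exists incl_nat; split; first exact: incl_nat_natural.
  move=> /(_ m) incl0; move: incl_nat_m; rewrite /nat_value incl0 zero_lfunE linear0.
  by move/eqP; rewrite eq_sym oner_eq0.
move=> eta eta_nat; exists (nat_value eta m) => v.
have diff_nat := natural_comb (- nat_value eta m) (incl_nat_natural hG suppGF) eta_nat.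
apply/eqP; rewrite -subr_eq0 -scaleNr addrC; apply/eqP; apply: (natural_eq0 diff_nat).
rewrite /nat_value add_lfunE scale_lfunE raddfD /=.
by rewrite -[vsval (incl_nat m _)]/(nat_value incl_nat m) incl_nat_m [_ *: _]mulr1 addNr.
Qed.

End NaturalTransformations.

Theorem proposition6p1 (K : fieldType) (d : Order.disp_t) (I : finPOrderType d)
    (unique_max : exists m : I, is_maximal m /\ forall m' : I, is_maximal m' -> m' = m)
    (F G : I -> {vspace K^o})
    (hF : is_subfunctor F) (hG : is_subfunctor G)
    (hF0 : exists v : I, F v != 0%VS) (hG0 : exists v : I, G v != 0%VS) :
  (subf_preceq F G <-> Nat_nonzero G F) /\ (Nat_nonzero G F <-> Nat_dim1 G F).
Proof.
case: unique_max => m [_ m_uniq].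
have le_m := le_unique_maximal m_uniq.
have Fm := subfunctor_neq0_top le_m hF hF0.
have Gm := subfunctor_neq0_top le_m hG hG0.
have nonzero_preceq := subf_preceq_of_Nat_nonzero hF le_m.
have preceq_dim1 := Nat_dim1_of_subf_preceq hF le_m hG Gm Fm.
have dim1_nonzero : Nat_dim1 G F -> Nat_nonzero G F.
  by case=> eta [eta_nat eta_neq0 _]; exists eta.
by split; split; auto.
Qed.
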